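(* Let $\mathcal{C}$ be the set of all coupon sets, $C_0=\{c_0\}$ the default coupon set, $f$ the coupon-set transition and $r$ the redemption value, all as in the context. Fix a trip-demand probability $\lambda\in[0,1]$, a discount factor $\gamma\in[0,1)$, a random trip-detail variable $X$ with distribution $P$, real-valued measurable functions $u(X)$ (utility gain from taking the target service) and $\tilde u(X)$ (expected utility of the alternative modes), a mode-selection policy $\pi_x(X,C)\in[0,1]$, a conditional distribution of the realized fare $p'\ge 0$ given $X$, and a coupon-selection policy $\pi_c(\cdot\mid p',C)$ (a probability distribution on $C$ for every $p'\ge0$, $C\in\mathcal C$). Suppose that real-valued functions $U$ on $\mathcal C$, $U_x(X,C)$ and $U_c(p',C)$ (with all expectations below finite) satisfy, for all $C\in\mathcal C$, all $X$ and all $p'\ge 0$, $$U(C)=(1-\lambda)\gamma\,U(f(C))+\lambda\,\mathbb{E}_X\big[U_x(X,C)\big],$$ $$U_x(X,C)=\big(1-\pi_x(X,C)\big)\gamma\,U(f(C))+\pi_x(X,C)\Big[u(X)+\mathbb{E}_{p'\mid X}\big[U_c(p',C)\big]\Big]+\tilde u(X),$$ $$U_c(p',C)=\sum_{c\in C}\pi_c(c\mid p',C)\big[r(p',c)+\gamma\,U(f(C,c))\big].$$ Then $$U(C_0)=\frac{1}{1-\gamma}\,\lambda\,\mathbb{E}_X\big[\tilde u(X)+\pi_x(X,C_0)\,u(X)\big].$$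
   Context: A coupon group is a triple $c=\langle v,T,n\rangle\in\mathbb{R}\times\mathbb{N}\times\mathbb{N}^+$ (face value $v$, remaining time to expiration $T$, number of coupons $n$). The default (zero-valued) group is $c_0=\langle 0,0,1\rangle$. A coupon set is a finite set of coupon groups containing $c_0$ in which no two groups have the same pair $(v,T)$; $\mathcal C$ is the set of all coupon sets and $C_0=\{c_0\}$. For a group, $f_c(\langle v,T,n\rangle)=\langle v,T-1,n\rangle$ if $v>0$, $n>0$ and $T\ge 1$, and $f_c(\langle v,T,n\rangle)=c_0$ otherwise. For $C\in\mathcal C$ and $c=\langle v,T,n\rangle\in C$, the transition after redeeming one coupon of group $c$ is $f(C,c)=\{f_c(c'):c'\in C\setminus\{c\}\}\cup\{f_c(\langle v,T,n-1\rangle)\}$, and $f(C):=f(C,c_0)$ (no redemption). In particular $f(C_0)=f(C_0,c_0)=C_0$. The redemption value of a group at realized fare $p'\ge0$ is $r(p',\langle v,T,n\rangle)=\min(v,p')$; so $r(p',c_0)=0$. $\mathbb{E}_X$ denotes expectation over $X\sim P$ and $\mathbb{E}_{p'\mid X}$ expectation over the realized fare given $X$. *)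

From HB Require Import structures.
From mathcomp Require Import all_boot all_order all_algebra.
From mathcomp Require Import finmap.
From mathcomp Require Import all_classical all_reals all_analysis.
Set Implicit Arguments. Unset Strict Implicit. Unset Printing Implicit Defensive.
Import Order.TTheory GRing.Theory Num.Theory.
Local Open Scope ring_scope.

Section Coupons.
Variable R : realType.

(* A coupon group <v, T, n> is encoded as ((v, T), n). *)
Definition coupon := (R * nat * nat)%type.

Definition cp_c0 : coupon := (0, 0%N, 1%N).

Definition cp_is_coupon_set (C : {fset coupon}) : Prop :=
  [/\ cp_c0 \in C,
      (forall c, c \in C -> (0 < c.2)%N) &
      (forall c c', c \in C -> c' \in C -> c.1 = c'.1 -> c = c')].

Local Open Scope fset_scope.

Definition cp_C0 : {fset coupon} := [fset cp_c0].

Definition cp_fc (c : coupon) : coupon :=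
  let: (v, T, n) := c in
  if [&& 0 < v, (0 < n)%N & (1 <= T)%N] then (v, T.-1, n) else cp_c0.

Definition cp_ftrans (C : {fset coupon}) (c : coupon) : {fset coupon} :=
  [fset cp_fc c' | c' in C `\ c] `|` [fset cp_fc (c.1.1, c.1.2, c.2.-1)].

Definition cp_fnone (C : {fset coupon}) : {fset coupon} := cp_ftrans C cp_c0.

Definition cp_redeem (p : R) (c : coupon) : R := Num.min c.1.1 p.

End Coupons.

(* At the default coupon set nothing can be redeemed and no transition leaves it:
   f(C0) = f(C0, c0) = C0 and r(p', c0) = 0.  Hence the coupon-selection value
   collapses to gamma U(C0) whatever the fare, and the Bellman equation at C0
   reads U(C0) = gamma U(C0) + lambda E[ut + pi_x u], which is solved for U(C0). *)
From HB Require Import structures.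
From mathcomp Require Import all_boot all_order all_algebra.
From mathcomp Require Import finmap.
From mathcomp Require Import all_classical all_reals all_analysis.
From mathcomp Require Import ring.
Import Order.TTheory GRing.Theory Num.Theory.
Local Open Scope ring_scope.

Section DefaultCouponSet.
Variable R : realType.

Lemma cp_is_coupon_set_C0 : cp_is_coupon_set (cp_C0 R).
Proof.
split.
- by rewrite inE.
- by move=> c; rewrite inE => /eqP ->.
- by move=> c c'; rewrite !inE => /eqP -> /eqP ->.
Qed.

Lemma cp_fnone_C0 : cp_fnone (cp_C0 R) = cp_C0 R.
Proof.
rewrite /cp_fnone /cp_ftrans fsetDv.
have -> : [fset cp_fc c' | c' in (fset0 : {fset coupon R})]%fset = fset0.
  by apply/fsetP => x; rewrite !inE; apply/imfsetP => -[y]; rewrite inE.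
by rewrite fset0U /cp_fc /= ltxx.
Qed.

Lemma cp_redeem_c0 (p : R) : 0 <= p -> cp_redeem p (cp_c0 R) = 0.
Proof. exact: min_l. Qed.

Lemma coupon_choice_value_C0 (gam p : R) (pic : coupon R -> R)
    (V : {fset coupon R} -> R) :
  0 <= p -> \sum_(c <- enum_fset (cp_C0 R)) pic c = 1 ->
  \sum_(c <- enum_fset (cp_C0 R))
    pic c * (cp_redeem p c + gam * V (cp_ftrans (cp_C0 R) c))
  = gam * V (cp_C0 R).
Proof.
rewrite !big_seq_fset1 => p0 ->.
by rewrite -/(cp_fnone _) cp_fnone_C0 cp_redeem_c0 // mul1r add0r.
Qed.

End DefaultCouponSet.

Lemma measurable_nneg (R : realType) : measurable [set p : R | 0 <= p]%classic.
Proof.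
have -> : [set p : R | 0 <= p]%classic = `[0, +oo[%classic.
  by apply/seteqP; split => x /=; rewrite in_itv /= andbT.
exact: measurable_itv.
Qed.

Section ProbabilityIntegrals.
Context (R : realType) (d : measure_display) (T : measurableType d).

Lemma Rintegral_cst_full (mu : measure T R) (D : set T) (k : R) :
  measurable D -> mu D = 1%E -> \int[mu]_(x in D) k = k.
Proof. by move=> mD muD; rewrite Rintegral_cst // muD mulr1. Qed.

Lemma Rintegral_subr_cst (P : probability T R) (f : T -> R) (k : R) :
  P.-integrable setT (EFin \o f) ->
  \int[P]_x (f x - k) = \int[P]_x f x - k.
Proof.
move=> intf; rewrite RintegralB //; last exact: finite_measure_integrable_cst.
by rewrite Rintegral_cst_full //; exact: probability_setT.
Qed.

End ProbabilityIntegrals.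

Lemma discounted_fixed_point (R : fieldType) (lam gam V I : R) :
  gam != 1 -> V = (1 - lam) * gam * V + lam * (gam * V + I) ->
  V = (1 - gam)^-1 * lam * I.
Proof.
move=> gam1 /eqP; rewrite -subr_eq0 => /eqP fixV.
have g1 : 1 - gam != 0 by rewrite subr_eq0 eq_sym.
apply: (mulfI g1); rewrite !mulrA mulfV // mul1r.
by apply/eqP; rewrite -subr_eq0 -fixV; apply/eqP; ring.
Qed.

Theorem corollary1 (R : realType) (d : measure_display) (TX : measurableType d)
  (P : probability TX R) (Q : TX -> probability R R)
  (lam gam : R) (u ut : TX -> R)
  (pix : TX -> {fset coupon R} -> R)
  (pic : R -> {fset coupon R} -> coupon R -> R)
  (U : {fset coupon R} -> R) (Ux : TX -> {fset coupon R} -> R)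
  (Uc : R -> {fset coupon R} -> R) :
  0 <= lam <= 1 -> 0 <= gam < 1 ->
  measurable_fun setT u -> measurable_fun setT ut ->
  (forall x C, cp_is_coupon_set C -> 0 <= pix x C <= 1) ->
  (forall x, Q x [set p : R | 0 <= p]%classic = 1%E) ->
  (forall p C, 0 <= p -> cp_is_coupon_set C ->
     (forall c, c \in C -> 0 <= pic p C c) /\ \sum_(c <- enum_fset C) pic p C c = 1) ->
  (forall C, cp_is_coupon_set C -> P.-integrable setT (EFin \o (fun x => Ux x C))) ->
  (forall x C, cp_is_coupon_set C ->
     (Q x).-integrable [set p : R | 0 <= p]%classic (EFin \o (fun p => Uc p C))) ->
  (forall C, cp_is_coupon_set C ->
     U C = (1 - lam) * gam * U (cp_fnone C) + lam * Rintegral P setT (fun x => Ux x C)) ->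
  (forall x C, cp_is_coupon_set C ->
     Ux x C = (1 - pix x C) * gam * U (cp_fnone C)
              + pix x C * (u x + Rintegral (Q x) [set p : R | 0 <= p]%classic (fun p => Uc p C))
              + ut x) ->
  (forall p C, 0 <= p -> cp_is_coupon_set C ->
     Uc p C = \sum_(c <- enum_fset C) pic p C c * (cp_redeem p c + gam * U (cp_ftrans C c))) ->
  U (cp_C0 R) = (1 - gam)^-1 * lam * Rintegral P setT (fun x => ut x + pix x (cp_C0 R) * u x).
Proof.
move=> _ /andP[_ gam1] _ _ _ hQ hpic hUxi _ hU hUx hUc.
have C0set := cp_is_coupon_set_C0 R.
set C0 := cp_C0 R; set U0 := U C0.
have Uc_C0 p : 0 <= p -> Uc p C0 = gam * U0.
  move=> p0; rewrite hUc // coupon_choice_value_C0 //.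
  by case: (hpic p C0 p0 C0set).
have EUc_C0 x : \int[Q x]_(p in [set p : R | 0 <= p]%classic) Uc p C0 = gam * U0.
  rewrite (@eq_Rintegral _ _ _ _ _ (fun _ => gam * U0)).
    exact: Rintegral_cst_full (measurable_nneg R) (hQ x).
  by move=> p; rewrite inE => /Uc_C0.
have EUx_C0 : \int[P]_x Ux x C0 = gam * U0 + \int[P]_x (ut x + pix x C0 * u x).
  have -> : \int[P]_x (ut x + pix x C0 * u x) = \int[P]_x (Ux x C0 - gam * U0).
    by apply: eq_Rintegral => x _; rewrite hUx // EUc_C0 cp_fnone_C0 -/C0 -/U0; ring.
  by rewrite Rintegral_subr_cst ?hUxi // addrC subrK.
apply: discounted_fixed_point; first by rewrite lt_eqF.
by move: (hU C0 C0set); rewrite cp_fnone_C0 -/C0 -/U0 EUx_C0.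
Qed.
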